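(* Fix a positive integer $n$, a nonzero $n$-partition $\lambda$ with $\lambda_n=0$, an $n$-semistandard tableau $T$ of shape $\lambda$, and $1\le h\le d+1$. Then for every location $(j,i)\ge(\beta_h,1)$ (in reading order) at which $\pi^{(j,i)}$ is defined, we have $\pi^{(j,i)}_{\zeta_{h-1}+1}<\dots<\pi^{(j,i)}_{\zeta_h}$.
   Context: Identify $\lambda=(\lambda_1,\dots,\lambda_n)$ (weakly decreasing nonnegative integers, $\lambda_n=0$, $\lambda\ne0$) with its Young diagram; $c_j$ is the length of column $j$. Let $\zeta_1<\dots<\zeta_d$ be the distinct column lengths, $\zeta_0:=0$, $\zeta_{d+1}:=n$; for $1\le h\le d$ let $\beta_h$ be the index of the rightmost column of length $\zeta_h$, and $\beta_{d+1}:=1$. Write $(j,i)$ for the box in column $j$, row $i$. Reading order: $(l,k)\le(j,i)$ iff $l<j$, or $l=j$ and $k\ge i$; convention $(j,c_j+1)$ means $(j-1,1)$. An $n$-semistandard tableau $T$ of shape $\lambda$ has entries in $[n]$, weakly increasing along rows, strictly increasing down columns; $T(j,i)$ is its entry, $C_j$ its $j$-th column. Permutations are in one-line form. Greedy procedure: $\pi^{(1,1)}$ has first $c_1$ entries those of $C_1$ increasing, followed by the rest of $[n]$ increasing. For $(j,i)$ with $j\ge2$ in reading order from $(2,c_2)$ to $(\lambda_1,1)$, define $\pi^{(j,i)}$ from $\pi:=\pi^{(j,i+1)}$: if $T(j-1,i)=T(j,i)$ set $\pi^{(j,i)}=\pi$; otherwise let $i_0=i$, and given $i_{x-1}$ with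 $\pi_{i_{x-1}}<T(j,i)$ let $i_x$ be the smallest index $>c_j$ with $\pi_{i_{x-1}}<\pi_{i_x}\le T(j,i)$, stopping at $i_m$ with $\pi_{i_m}=T(j,i)$; set $\pi^{(j,i)}_{i_x}=\pi_{i_{x-1}}$ ($1\le x\le m$), $\pi^{(j,i)}_{i_0}=\pi_{i_m}$, others unchanged. Thus $\pi^{(j,i)}$ is defined at $(1,1)$ and at all $(j,i)$ with $j\ge2$. *)

From mathcomp Require Import all_boot.
Set Implicit Arguments. Unset Strict Implicit. Unset Printing Implicit Defensive.

(* A partition lam = (lam_1,...,lam_n) is a seq nat of size n; lam_i = nth 0 lam (i-1).
   Columns and rows are 1-indexed; (j,i) = box in column j, row i. *)
Definition is_npartition (n : nat) (lam : seq nat) : Prop :=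
  [/\ size lam = n, sorted geq lam, nth 0 lam n.-1 = 0 & has (fun x => 0 < x) lam].

Definition lam1 (lam : seq nat) : nat := nth 0 lam 0.

Definition collen (lam : seq nat) (j : nat) : nat := count (fun x => j <= x) lam.

Definition in_diagram (lam : seq nat) (j i : nat) : bool :=
  [&& 1 <= j, j <= lam1 lam, 1 <= i & i <= collen lam j].

Definition semistandard (n : nat) (lam : seq nat) (T : nat -> nat -> nat) : Prop :=
  [/\ (forall j i, in_diagram lam j i -> 1 <= T j i <= n),
      (forall j i, in_diagram lam j i -> in_diagram lam j.+1 i -> T j i <= T j.+1 i) &
      (forall j i, in_diagram lam j i -> in_diagram lam j i.+1 -> T j i < T j i.+1)].

Definition zetas (lam : seq nat) : seq nat :=
  sort leq (undup [seq collen lam j | j <- iota 1 (lam1 lam)]).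
Definition dd (lam : seq nat) : nat := size (zetas lam).
Definition zeta (n : nat) (lam : seq nat) (h : nat) : nat :=
  if h == 0 then 0 else if h == (dd lam).+1 then n else nth 0 (zetas lam) h.-1.
Definition beta (n : nat) (lam : seq nat) (h : nat) : nat :=
  if h == (dd lam).+1 then 1
  else \max_(1 <= j < (lam1 lam).+1 | collen lam j == zeta n lam h) j.

(* permutations in one-line form: seq of length n; pi_k = nth 0 pi k.-1 *)
Definition pent (pi : seq nat) (k : nat) : nat := nth 0 pi k.-1.

Definition pi11 (n : nat) (lam : seq nat) (T : nat -> nat -> nat) : seq nat :=
  let C1 := [seq T 1 i | i <- iota 1 (collen lam 1)] in
  C1 ++ [seq x <- iota 1 n | x \notin C1].

(* the chain i_1, i_2, ..., i_m of the greedy step; fuel bounds its length *)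
Fixpoint chain (fuel : nat) (n c t : nat) (pi : seq nat) (v : nat) : seq nat :=
  match fuel with
  | 0 => [::]
  | f.+1 =>
    if v == t then [::] else
    match ohead [seq k <- iota c.+1 (n - c) | (v < pent pi k) && (pent pi k <= t)] with
    | None => [::]
    | Some k => k :: chain f n c t pi (pent pi k)
    end
  end.

(* pi^{(j,i)} from pi = pi^{(j,i+1)} *)
Definition step (n : nat) (lam : seq nat) (T : nat -> nat -> nat)
    (pi : seq nat) (ji : nat * nat) : seq nat :=
  let (j, i) := ji in
  let t := T j i in
  if T j.-1 i == t then pi else
  let ch := chain n n (collen lam j) t pi (pent pi i) in
  let idx := i :: ch in
  mkseq (fun p0 => let p := p0.+1 in
           if p \in ch then pent pi (nth 0 idx (index p ch))
           else if p == i then pent pi (last i ch)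
           else pent pi p) n.

Definition locs (lam : seq nat) : seq (nat * nat) :=
  flatten [seq [seq (j, i) | i <- rev (iota 1 (collen lam j))]
          | j <- iota 2 (lam1 lam).-1].

(* pi^{(j,i)} (meaningful at (1,1) and at boxes (j,i) with j >= 2) *)
Definition pi_at (n : nat) (lam : seq nat) (T : nat -> nat -> nat) (j i : nat) : seq nat :=
  if (j, i) == (1, 1) then pi11 n lam T
  else foldl (step n lam T) (pi11 n lam T) (take (index (j, i) (locs lam)).+1 (locs lam)).

Definition pi_defined (lam : seq nat) (j i : nat) : bool :=
  ((j, i) == (1, 1)) || ((2 <= j) && in_diagram lam j i).

Definition read_le (lk ji : nat * nat) : bool :=
  (lk.1 < ji.1) || ((lk.1 == ji.1) && (ji.2 <= lk.2)).

From mathcomp Require Import all_boot zify.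
Set Implicit Arguments. Unset Strict Implicit. Unset Printing Implicit Defensive.

(* Each greedy step permutes positions: position i takes the value T(j,i) found at
   the end of the chain, and every chain position takes the previous, smaller, chain
   value; all chain positions lie beyond c_j.  Hence after column j is processed the
   first c_j entries are column j of T (strictly increasing), and a block of
   consecutive positions beyond c_j that is increasing stays increasing, because
   each chain position is the first admissible one.  The block zeta_{h-1}+1..zeta_h
   lies inside column beta_h (or, for h = d+1, in the sorted tail of pi^(1,1)), and
   every later column has length at most zeta_{h-1}. *)

Lemma foldl_flatten (A B C : Type) (f : A -> B -> A) (g : C -> seq B) x s :
  foldl f x (flatten (map g s)) = foldl (fun x a => foldl f x (g a)) x s.
Proof. by elim: s x => [|a s IH] x //=; rewrite foldl_cat IH. Qed.

Lemma mkseq_succ (A : Type) (f : nat -> A) m : mkseq (fun p => f p.+1) m = map f (iota 1 m).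
Proof. by rewrite /mkseq -(addn0 1) iotaDl -map_comp. Qed.

Lemma map_pent s : map (pent s) (iota 1 (size s)) = s.
Proof. by rewrite -mkseq_succ -[RHS](mkseq_nth 0). Qed.

Lemma nth_belast (A : Type) (y z : A) s x : x < size s -> nth y (belast z s) x = nth y (z :: s) x.
Proof. by move=> Hx; rewrite [in RHS]lastI nth_rcons size_belast Hx. Qed.

Lemma ohead_filter_iota (P : pred nat) m l :
  match ohead [seq k <- iota m l | P k] with
  | Some k => [/\ P k, m <= k, k < m + l & forall k', m <= k' < k -> ~~ P k']
  | None => forall k', m <= k' < m + l -> ~~ P k'
  end.
Proof.
elim: l m => [|l IH] m /=; first by move=> k' Hk'; lia.
case: ifP => Pm /=; first by split=> //; [lia | move=> k' Hk'; lia].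
have := IH m.+1; case: (ohead _) => [k [Pk Hmk Hkl Hmin] | Hnone].
  split=> //; [lia | lia | move=> k' Hk'].
  by have [->|ne] := eqVneq k' m; [rewrite Pm | apply: Hmin; lia].
by move=> k' Hk'; have [->|ne] := eqVneq k' m; [rewrite Pm | apply: Hnone; lia].
Qed.

Section Relabel.

Variable T : eqType.

Definition relabel (u v : seq T) (p : T) : T := nth p v (index p u).

Lemma relabel_notin u v p : size v = size u -> p \notin u -> relabel u v p = p.
Proof. by move=> Svu pu; rewrite /relabel memNindex // nth_default // Svu. Qed.

Lemma map_relabel u v : uniq u -> size v = size u -> map (relabel u v) u = v.
Proof.
case: v => [|y v] Uu Svu; first by case: u Uu Svu.
apply: (@eq_from_nth _ y); rewrite size_map // => k Hk.
by rewrite (nth_map y) // /relabel index_uniq // (set_nth_default y) // Svu.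
Qed.

Lemma relabel_perm s u v : uniq s -> uniq u -> {subset u <= s} -> perm_eq u v ->
  perm_eq (map (relabel u v) s) s.
Proof.
move=> Us Uu us uv; pose a : pred T := fun x => x \in u.
have Svu : size v = size u by rewrite (perm_size uv).
have fa_u : perm_eq [seq x <- s | a x] u.
  apply: uniq_perm => //; first exact: filter_uniq.
  by move=> x; rewrite mem_filter /a; case ux: (x \in u); rewrite //= us.
have split_s : perm_eq s ([seq x <- s | a x] ++ [seq x <- s | predC a x]).
  by rewrite perm_sym perm_filterC.
rewrite perm_sym (perm_trans split_s) // perm_sym.
apply: perm_trans (perm_map _ split_s) _.
have fixed_rest : map (relabel u v) [seq x <- s | predC a x] = [seq x <- s | predC a x].
  rewrite -[RHS]map_id; apply/eq_in_map => x; rewrite mem_filter => /andP[xu _].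
  exact: relabel_notin.
rewrite map_cat fixed_rest perm_cat2r perm_sym (perm_trans fa_u) // (perm_trans uv) //.
by rewrite -{1}(map_relabel Uu Svu) perm_map // perm_sym.
Qed.

End Relabel.

Section Chain.

Variables (n c t : nat) (pi : seq nat).

Let next_ohead v := ohead_filter_iota (fun k => (v < pent pi k) && (pent pi k <= t)) c.+1 (n - c).

Lemma chain_range f v k : k \in chain f n c t pi v -> c < k <= n.
Proof.
elim: f v => [|f IH] v //=; case: eqP => // _.
have := next_ohead v; case: (ohead _) => [k0 [_ H1 H2 _]|_] //.
by rewrite inE => /orP[/eqP->|/IH//]; lia.
Qed.

Lemma chain_increasing f v : path ltn v (map (pent pi) (chain f n c t pi v)).
Proof.
elim: f v => [|f IH] v //=; case: eqP => // _.
have := next_ohead v; case: (ohead _) => [k0 [/andP[lt_v _] _ _ _]|_] //=.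
by rewrite lt_v IH.
Qed.

Lemma chain_le_target f v : all (fun k => pent pi k <= t) (chain f n c t pi v).
Proof.
elim: f v => [|f IH] v //=; case: eqP => // _.
have := next_ohead v; case: (ohead _) => [k0 [/andP[_ le_t] _ _ _]|_] //=.
by rewrite le_t IH.
Qed.

Lemma chain_uniq f v : uniq (chain f n c t pi v).
Proof.
apply: (@map_uniq _ _ (pent pi)); apply: (sorted_uniq ltn_trans ltnn).
exact: path_sorted (chain_increasing f v).
Qed.

Lemma chain_min f v x : x < size (chain f n c t pi v) ->
  forall k, c < k < nth 0 (chain f n c t pi v) x ->
    ~~ ((nth 0 (v :: map (pent pi) (chain f n c t pi v)) x < pent pi k) && (pent pi k <= t)).
Proof.
elim: f v x => [|f IH] v x //=; case: eqP => // _.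
have := next_ohead v; case: (ohead _) => [k0 [_ _ _ Hmin]|_] //=.
by case: x => [|x] /= Hx k Hk; [apply: Hmin; lia | apply: IH].
Qed.

Lemma chain_last f v : v < t -> t - v < f -> (exists2 q, c < q <= n & pent pi q = t) ->
  chain f n c t pi v != [::] /\ pent pi (last 0 (chain f n c t pi v)) = t.
Proof.
elim: f v => [|f IH] v // lt_vt Hf [q Hq pq] /=; rewrite (ltn_eqF lt_vt).
have := next_ohead v; case: (ohead _) => [k0 [/andP[lt_v le_t] _ _ _]|Hnone] /=; last first.
  by have := Hnone q ltac:(lia); rewrite pq lt_vt leqnn.
split=> //; have [Et|ne] := eqVneq (pent pi k0) t.
  by case: f {IH Hf} => [|f] /=; rewrite ?Et ?eqxx.
have := IH (pent pi k0) ltac:(lia) ltac:(lia) (ex_intro2 _ _ q Hq pq).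
by case: (chain _ _ _ _ _ _) => [[]|x s []].
Qed.

End Chain.

Definition increasing_on (lo hi : nat) (pi : seq nat) : Prop :=
  forall k, lo + 1 <= k -> k < hi -> pent pi k < pent pi k.+1.

Lemma pent_inj n pi p q : perm_eq pi (iota 1 n) -> 1 <= p <= n -> 1 <= q <= n ->
  pent pi p = pent pi q -> p = q.
Proof.
move=> Hpi Hp Hq; have Spi : size pi = n by rewrite (perm_size Hpi) size_iota.
have Upi : uniq pi by rewrite (perm_uniq Hpi) iota_uniq.
by rewrite /pent => /eqP; rewrite nth_uniq ?Spi //; lia.
Qed.

Section Step.

Variables (n : nat) (lam : seq nat) (T : nat -> nat -> nat).

Definition step_chain (pi : seq nat) (j i : nat) : seq nat :=
  chain n n (collen lam j) (T j i) pi (pent pi i).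

Lemma step_same pi j i : T j.-1 i = T j i -> step n lam T pi (j, i) = pi.
Proof. by move=> E; rewrite /step E eqxx. Qed.

Section Proper.

Variables (pi : seq nat) (j i : nat).
Hypotheses (Tji : T j.-1 i != T j i) (Hi : 1 <= i <= collen lam j) (Hc : collen lam j <= n).

Let ch := step_chain pi j i.
(* the step is [pi \o shift], where [shift] maps i_x to i_(x-1) and i_0 = i to i_m *)
Let shift := relabel (i :: ch) (last i ch :: belast i ch).

Lemma step_chain_range k : k \in ch -> collen lam j < k <= n.
Proof. exact: chain_range. Qed.

Lemma row_notin_step_chain : i \notin ch.
Proof. by apply/negP => /step_chain_range; lia. Qed.

Lemma step_relabel : step n lam T pi (j, i) = map (pent pi \o shift) (iota 1 n).
Proof.
rewrite /step (negbTE Tji) -mkseq_succ; apply: eq_mkseq => p0 /=; move: p0.+1 => p.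
rewrite /shift /relabel /= -/(step_chain pi j i) -/ch.
case: ifP => [pch | pch]; last first.
  case: eqP => [<-|/eqP ne]; first by rewrite eqxx.
  by rewrite eq_sym (negbTE ne) /= nth_default // size_belast memNindex ?pch.
have -> : (i == p) = false by apply/negP => /eqP E; move: row_notin_step_chain; rewrite E pch.
have lt_pch : index p ch < size ch by rewrite index_mem.
by rewrite /= nth_belast // (set_nth_default 0) //= ltnW.
Qed.

Lemma pent_step p : 1 <= p <= n -> pent (step n lam T pi (j, i)) p = pent pi (shift p).
Proof.
move=> Hp; rewrite step_relabel /pent (nth_map 0) ?size_iota; last lia.
by rewrite nth_iota /=; [congr (pent pi (shift _)); lia | lia].
Qed.

Lemma pent_step_chain x : x < size ch ->
  pent (step n lam T pi (j, i)) (nth 0 ch x) = pent pi (nth 0 (i :: ch) x).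
Proof.
move=> Hx; have chx : nth 0 ch x \in ch by exact: mem_nth.
rewrite pent_step; last by have := step_chain_range chx; lia.
have ne : (i == nth 0 ch x) = false.
  by apply/negP => /eqP E; move: row_notin_step_chain; rewrite E chx.
rewrite /shift /relabel /= ne index_uniq ?chain_uniq //= nth_belast //.
by rewrite (set_nth_default 0) //= ltnW.
Qed.

Lemma pent_step_row : pent (step n lam T pi (j, i)) i = pent pi (last i ch).
Proof. by rewrite pent_step /shift /relabel /= ?eqxx //; lia. Qed.

Lemma pent_step_other p : 1 <= p <= n -> p \notin i :: ch ->
  pent (step n lam T pi (j, i)) p = pent pi p.
Proof. by move=> Hp pch; rewrite pent_step // /shift relabel_notin //= size_belast. Qed.

Lemma step_perm_proper : perm_eq pi (iota 1 n) -> perm_eq (step n lam T pi (j, i)) (iota 1 n).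
Proof.
move=> Hpi; have Spi : size pi = n by rewrite (perm_size Hpi) size_iota.
rewrite step_relabel map_comp; apply: perm_trans Hpi.
have {2}<- : map (pent pi) (iota 1 n) = pi by rewrite -Spi map_pent.
apply: perm_map; apply: relabel_perm; rewrite ?iota_uniq //=.
- by rewrite row_notin_step_chain chain_uniq.
- by move=> k; rewrite inE mem_iota => /orP[/eqP->|/step_chain_range]; lia.
- by rewrite {1}lastI perm_rcons.
Qed.

Let w x := nth 0 (pent pi i :: map (pent pi) ch) x.

Lemma w_nth x : x <= size ch -> w x = pent pi (nth 0 (i :: ch) x).
Proof. by move=> Hx; rewrite /w -(map_cons (pent pi)) (nth_map 0). Qed.

Lemma chain_values_lt x y : x < y <= size ch -> w x < w y.
Proof.
move=> Hxy; apply: (sorted_ltn_nth ltn_trans); rewrite ?inE /= ?size_map; try lia.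
exact: chain_increasing.
Qed.

Lemma pent_step_in p : p \in ch -> pent (step n lam T pi (j, i)) p = w (index p ch).
Proof.
move=> pch; have Hx : index p ch < size ch by rewrite index_mem.
by rewrite -{1}(nth_index 0 pch) pent_step_chain // w_nth // ltnW.
Qed.

Lemma pent_in_chain p : p \in ch -> pent pi p = w (index p ch).+1.
Proof. by move=> pch; rewrite w_nth /= ?nth_index // index_mem. Qed.

Lemma pent_before_chain_lt k : collen lam j < k < n -> k \notin ch -> k.+1 \in ch ->
  perm_eq pi (iota 1 n) -> pent pi k < pent pi k.+1 -> pent pi k < w (index k.+1 ch).
Proof.
move=> Hk kch k1ch Hpi lt_k; have Hy : index k.+1 ch < size ch by rewrite index_mem.
have Hk' : collen lam j < k < nth 0 ch (index k.+1 ch) by rewrite nth_index //; lia.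
have le_t : pent pi k.+1 <= T j i.
  by have /allP := chain_le_target n (collen lam j) (T j i) pi n (pent pi i); apply.
have le_w : pent pi k <= w (index k.+1 ch).
  by move: (chain_min Hy Hk'); rewrite negb_and -leqNgt -ltnNge => /orP[//|]; lia.
rewrite ltn_neqAle le_w andbT w_nth; last lia; apply/eqP => /(pent_inj Hpi) Ek.
have yin : nth 0 (i :: ch) (index k.+1 ch) \in i :: ch by rewrite mem_nth //=; lia.
have y_range : 1 <= nth 0 (i :: ch) (index k.+1 ch) <= n.
  by move: yin; rewrite inE => /orP[/eqP->|/step_chain_range]; lia.
move: yin; rewrite -Ek; try lia.
by rewrite inE (negbTE kch) orbF => /eqP; lia.
Qed.

(* A chain position only receives a smaller value, and its minimality forbids the
   position just before it from holding a value in between. *)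
Lemma step_increasing_proper lo hi : collen lam j <= lo -> hi <= n ->
  perm_eq pi (iota 1 n) -> increasing_on lo hi pi ->
  increasing_on lo hi (step n lam T pi (j, i)).
Proof.
move=> Hlo Hhi Hpi inc k Hk1 Hk2; have lt_k := inc k Hk1 Hk2.
have out_ch p : lo < p <= n -> p \notin ch -> pent (step n lam T pi (j, i)) p = pent pi p.
  move=> Hp pch; apply: pent_step_other; rewrite ?inE ?negb_or ?pch ?andbT //; last lia.
  by apply/eqP; lia.
have [kch|kch] := boolP (k \in ch); have [k1ch|k1ch] := boolP (k.+1 \in ch).
- rewrite !pent_step_in //; rewrite !pent_in_chain // in lt_k.
  have Hx : index k ch < size ch by rewrite index_mem.
  have Hy : index k.+1 ch < size ch by rewrite index_mem.
  suff lt_xy : index k ch < index k.+1 ch by apply: chain_values_lt; lia.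
  case: ltngtP => [//|lt_yx|eq_xy]; last first.
    by have := nth_index 0 k1ch; rewrite -eq_xy nth_index //; lia.
  by have := @chain_values_lt (index k.+1 ch).+1 (index k ch).+1 ltac:(lia); lia.
- rewrite (pent_step_in kch) out_ch //; last lia; rewrite pent_in_chain // in lt_k.
  have Hx : index k ch < size ch by rewrite index_mem.
  by have := @chain_values_lt (index k ch) (index k ch).+1 ltac:(lia); lia.
- by rewrite (pent_step_in k1ch) out_ch //; [apply: pent_before_chain_lt => //; lia | lia].
- by rewrite !out_ch //; lia.
Qed.

End Proper.

Lemma step_perm pi j i : 1 <= i <= collen lam j -> collen lam j <= n ->
  perm_eq pi (iota 1 n) -> perm_eq (step n lam T pi (j, i)) (iota 1 n).
Proof.
have [E|ne] := eqVneq (T j.-1 i) (T j i); first by rewrite step_same.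
exact: step_perm_proper.
Qed.

Lemma step_increasing pi j i lo hi : 1 <= i <= collen lam j -> collen lam j <= n ->
  collen lam j <= lo -> hi <= n -> perm_eq pi (iota 1 n) -> increasing_on lo hi pi ->
  increasing_on lo hi (step n lam T pi (j, i)).
Proof.
have [E|ne] := eqVneq (T j.-1 i) (T j i); first by rewrite step_same.
by move=> Hi Hc Hlo Hhi Hpi; apply: (step_increasing_proper ne).
Qed.

End Step.

Lemma bigmax_natP (P : pred nat) a b : (exists2 j, a <= j < b & P j) ->
  let M := \max_(a <= j < b | P j) j in
  [/\ a <= M < b, P M & forall j, M < j < b -> ~~ P j].
Proof.
move=> [j0 Hj0 Pj0] M.
have le_M j : a <= j < b -> P j -> j <= M.
  move=> Hj Pj; have := @leq_bigmax_seq _ (index_iota a b) P id j.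
  by rewrite mem_index_iota; apply.
have : (M == 0) || (P M && (a <= M < b)).
  rewrite /M big_seq_cond.
  apply: (big_ind (fun m => (m == 0) || (P m && (a <= m < b))))
    => [//| x y Kx Ky | j /andP[]]; last first.
    by rewrite mem_index_iota => Hj ->; rewrite Hj orbT.
  by case: (leqP x y).
case/orP => [/eqP M0 | /andP[PM HM]]; last first.
  by split=> // j Hj; apply/negP => /(le_M j); lia.
have j00 : j0 = 0 by have := le_M j0 Hj0 Pj0; rewrite M0; lia.
rewrite M0 -j00; split=> // j Hj; apply/negP => /(le_M j); lia.
Qed.

Lemma leq_collen lam j j' : j <= j' -> collen lam j' <= collen lam j.
Proof. by move=> le_jj'; apply: sub_count => x /= /(leq_trans le_jj'). Qed.

Lemma mem_diagram lam j i : 1 <= j <= lam1 lam -> 1 <= i <= collen lam j -> in_diagram lam j i.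
Proof. by move=> Hj Hi; apply/and4P; split; lia. Qed.

Lemma in_diagram_prev lam j i : 2 <= j -> in_diagram lam j i -> in_diagram lam j.-1 i.
Proof.
move=> Hj /and4P[_ Hjl Hi Hic]; have := @leq_collen lam j.-1 j (leq_pred j).
by move=> Hc; apply/and4P; split; lia.
Qed.

Section Tableau.

Variables (n : nat) (lam : seq nat) (T : nat -> nat -> nat).
Hypotheses (Hlam : is_npartition n lam) (HT : semistandard n lam T).

Lemma leq_lam1 x : x \in lam -> x <= lam1 lam.
Proof.
case: Hlam => _ Hs _ _; rewrite /lam1; case: (lam) Hs => [|a s] //= Hs.
rewrite inE => /orP[/eqP->//|xs].
have ge_trans : transitive geq by move=> p q r H1 H2; exact: leq_trans H2 H1.
by have /allP := order_path_min ge_trans Hs; apply.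
Qed.

Lemma lam1_gt0 : 0 < lam1 lam.
Proof. by case: Hlam => _ _ _ /hasP [x /leq_lam1 le_x /= x_gt0]; apply: leq_trans le_x. Qed.

Lemma collen_pos j : j <= lam1 lam -> 0 < collen lam j.
Proof.
move=> Hj; rewrite /collen -has_count; apply/hasP; exists (lam1 lam) => //.
by rewrite /lam1; case: Hlam => _ _ _; case: (lam) => //= a s _; rewrite mem_head.
Qed.

Lemma collen_le_n j : collen lam j <= n.
Proof. by case: Hlam => Hs _ _ _; rewrite /collen -Hs count_size. Qed.

Lemma tableau_range j i : in_diagram lam j i -> 1 <= T j i <= n.
Proof. by case: HT => Hr _ _; apply: Hr. Qed.

Lemma tableau_col_lt j k i : in_diagram lam j i -> 1 <= k < i -> T j k < T j i.
Proof.
case: HT => _ _ Hcol; elim: i => [|i IH] Hd Hk; first lia.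
have Hd' : in_diagram lam j i by move: Hd => /and4P[? ? ? ?]; apply/and4P; split; lia.
have [-> | ne] := eqVneq k i; first exact: Hcol.
by apply: ltn_trans (Hcol _ _ Hd' Hd); apply: IH => //; lia.
Qed.

Lemma tableau_row_le j i : 2 <= j -> in_diagram lam j i -> T j.-1 i <= T j i.
Proof.
case: HT => _ Hrow _ Hj Hd; have := Hrow j.-1 i (in_diagram_prev Hj Hd).
by rewrite prednK; [apply | lia].
Qed.

Definition column1 : seq nat := [seq T 1 i | i <- iota 1 (collen lam 1)].

Lemma column1_uniq : uniq column1.
Proof.
rewrite map_inj_in_uniq ?iota_uniq // => a b; rewrite !mem_iota => Ha Hb Eab.
have Dk k : 1 <= k <= collen lam 1 -> in_diagram lam 1 k.
  by move=> Hk; apply: mem_diagram => //; have := lam1_gt0; lia.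
case: (ltngtP a b) => // lt_ab.
  by have := tableau_col_lt (Dk b ltac:(lia)) (ltac:(lia) : 1 <= a < b); rewrite Eab ltnn.
by have := tableau_col_lt (Dk a ltac:(lia)) (ltac:(lia) : 1 <= b < a); rewrite Eab ltnn.
Qed.

Definition pi11_rest : seq nat := [seq x <- iota 1 n | x \notin column1].

Lemma pi11_cat : pi11 n lam T = column1 ++ pi11_rest.
Proof. by []. Qed.

Lemma pi11_perm : perm_eq (pi11 n lam T) (iota 1 n).
Proof.
have col_iota : {subset column1 <= iota 1 n}.
  move=> x /mapP[a]; rewrite mem_iota => Ha ->.
  have Hd : in_diagram lam 1 a by apply: mem_diagram; have := lam1_gt0; lia.
  by rewrite mem_iota; have := tableau_range Hd; lia.
rewrite pi11_cat; apply: uniq_perm; rewrite ?iota_uniq //.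
  rewrite cat_uniq column1_uniq filter_uniq ?iota_uniq // andbT.
  by apply/hasPn => x; rewrite mem_filter => /andP[].
move=> x; rewrite mem_cat mem_filter; apply/idP/idP; first by case/orP => [/col_iota|/andP[]].
by move=> x_iota; case: (boolP (x \in column1)) => //=; rewrite x_iota.
Qed.

Lemma size_column1 : size column1 = collen lam 1.
Proof. by rewrite size_map size_iota. Qed.

Lemma pent_pi11 k : 1 <= k <= collen lam 1 -> pent (pi11 n lam T) k = T 1 k.
Proof.
move=> Hk; rewrite pi11_cat /pent nth_cat size_column1 ifT; last lia.
by rewrite (nth_map 0) ?size_iota ?nth_iota; try lia; congr T; lia.
Qed.

Lemma pi11_increasing : increasing_on (collen lam 1) n (pi11 n lam T).
Proof.
have Srest : size pi11_rest = n - collen lam 1.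
  by rewrite -(size_iota 1 n) -(perm_size pi11_perm) pi11_cat size_cat size_column1 addKn.
move=> k Hk1 Hk2; rewrite pi11_cat /pent !nth_cat size_column1 !ifF; try lia.
apply: (sorted_ltn_nth ltn_trans); rewrite ?inE ?Srest; try lia.
by apply: sorted_filter; [exact: ltn_trans | exact: iota_ltn_sorted].
Qed.

Lemma target_after_col pi j i : 2 <= j -> in_diagram lam j i -> T j.-1 i != T j i ->
  perm_eq pi (iota 1 n) ->
  (forall k, 1 <= k <= collen lam j -> pent pi k = T (if i < k then j else j.-1) k) ->
  exists2 q, collen lam j < q <= n & pent pi q = T j i.
Proof.
move=> Hj Hd ne Hpi inv; have [Hj1 Hjl Hi1 Hic] := and4P Hd.
have Spi : size pi = n by rewrite (perm_size Hpi) size_iota.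
have t_in : T j i \in pi by rewrite (perm_mem Hpi) mem_iota; have := tableau_range Hd; lia.
set q := (index (T j i) pi).+1.
have pq : pent pi q = T j i by rewrite /pent nth_index.
have q_le : q <= n by rewrite -Spi index_mem.
exists q; rewrite // q_le andbT ltnNge; apply/negP => le_qc.
have Dq : in_diagram lam j q by apply: mem_diagram; lia.
have := inv q (ltac:(lia)); rewrite pq; case: ltngtP => [lt_iq|lt_qi|eq_iq] E.
- by have := tableau_col_lt Dq (ltac:(lia) : 1 <= i < q); rewrite -E ltnn.
- have := tableau_row_le Hj Dq; have := tableau_col_lt Hd (ltac:(lia) : 1 <= q < i); lia.
- by move: ne; rewrite E -eq_iq eqxx.
Qed.

Lemma step_col_invariant pi j i : 2 <= j -> in_diagram lam j i -> perm_eq pi (iota 1 n) ->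
  (forall k, 1 <= k <= collen lam j -> pent pi k = T (if i < k then j else j.-1) k) ->
  forall k, 1 <= k <= collen lam j ->
    pent (step n lam T pi (j, i)) k = T (if i <= k then j else j.-1) k.
Proof.
move=> Hj Hd Hpi inv k Hk; have [Hj1 Hjl Hi1 Hic] := and4P Hd.
have Hc := collen_le_n j.
have [E|ne] := eqVneq (T j.-1 i) (T j i).
  rewrite step_same // inv //; have [->|ne_ki] := eqVneq k i; first by rewrite ltnn leqnn.
  by rewrite [i <= k]leq_eqVlt eq_sym (negbTE ne_ki).
have [->|ne_ki] := eqVneq k i.
  rewrite leqnn pent_step_row //; last lia.
  have Hv : pent pi i = T j.-1 i by rewrite inv ?ltnn //; lia.
  have Hrow := tableau_row_le Hj Hd; have Hv1 := tableau_range (in_diagram_prev Hj Hd).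
  have Ht := tableau_range Hd.
  have lt_v : pent pi i < T j i by rewrite Hv ltn_neqAle ne Hrow.
  have lt_f : T j i - pent pi i < n by lia.
  have [nz <-] := chain_last lt_v lt_f (target_after_col Hj Hd ne Hpi inv).
  by rewrite /step_chain; case: (chain _ _ _ _ _ _) nz.
rewrite pent_step_other //; try lia.
  by rewrite inv // [i <= k]leq_eqVlt eq_sym (negbTE ne_ki).
rewrite inE negb_or ne_ki /=; apply/negP => /step_chain_range; lia.
Qed.

Definition col_boxes (j : nat) : seq (nat * nat) :=
  [seq (j, i) | i <- rev (iota 1 (collen lam j))].

Definition pi_after_col (j : nat) : seq nat :=
  foldl (fun pi j' => foldl (step n lam T) pi (col_boxes j')) (pi11 n lam T) (iota 2 j.-1).

Lemma pi_after_colS j : 1 <= j ->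
  pi_after_col j.+1 = foldl (step n lam T) (pi_after_col j) (col_boxes j.+1).
Proof.
move=> Hj; rewrite /pi_after_col /=; have -> : iota 2 j = iota 2 j.-1 ++ [:: j.+1].
  rewrite -{1}(prednK Hj) -[j.-1.+1]addn1 iotaD /=; congr (_ ++ [:: _]); lia.
by rewrite foldl_cat.
Qed.

Lemma size_col_boxes j : size (col_boxes j) = collen lam j.
Proof. by rewrite size_map size_rev size_iota. Qed.

Lemma nth_col_boxes j m : m < collen lam j -> nth (0, 0) (col_boxes j) m = (j, collen lam j - m).
Proof.
move=> Hm; rewrite (nth_map 0) ?size_rev ?size_iota // nth_rev ?size_iota //.
by rewrite nth_iota; [congr pair; lia | lia].
Qed.

Lemma mem_col_boxes j x : x \in col_boxes j -> x.1 = j /\ 1 <= x.2 <= collen lam j.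
Proof. by move=> /mapP[i]; rewrite mem_rev mem_iota => Hi ->; split => //; lia. Qed.

Lemma index_col_boxes j i : 1 <= i <= collen lam j ->
  index (j, i) (col_boxes j) = collen lam j - i.
Proof.
move=> Hi; have Hm : collen lam j - i < collen lam j by lia.
have := nth_col_boxes Hm; rewrite (_ : collen lam j - (collen lam j - i) = i); last lia.
move=> <-; rewrite index_uniq ?size_col_boxes // map_inj_uniq ?rev_uniq ?iota_uniq //.
by move=> a b [].
Qed.

Lemma foldl_step_col pi j m : 2 <= j <= lam1 lam -> m <= collen lam j ->
  perm_eq pi (iota 1 n) -> (forall k, 1 <= k <= collen lam j -> pent pi k = T j.-1 k) ->
  let pi' := foldl (step n lam T) pi (take m (col_boxes j)) in
  perm_eq pi' (iota 1 n) /\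
  forall k, 1 <= k <= collen lam j -> pent pi' k = T (if collen lam j - m < k then j else j.-1) k.
Proof.
move=> Hj + Hpi inv; elim: m => [|m IH] Hm /=.
  by rewrite take0; split=> // k Hk; rewrite inv // ifF //; lia.
have [Hpi' inv'] := IH (ltnW Hm).
rewrite (take_nth (0, 0)) ?size_col_boxes // foldl_rcons nth_col_boxes //.
have Dm : in_diagram lam j (collen lam j - m) by apply: mem_diagram; lia.
split; first by apply: step_perm => //; [lia | exact: collen_le_n].
move=> k Hk; rewrite (step_col_invariant _ Dm Hpi') //; try lia.
by congr (T (if _ then _ else _) k); lia.
Qed.

Lemma pi_after_col_spec j : 1 <= j <= lam1 lam ->
  perm_eq (pi_after_col j) (iota 1 n) /\
  forall k, 1 <= k <= collen lam j -> pent (pi_after_col j) k = T j k.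
Proof.
elim: j => [|j IH] // Hj; have [-> | j_gt0] := posnP j.
  by split; [exact: pi11_perm | exact: pent_pi11].
have [Hpi inv] := IH ltac:(lia); have Hc := @leq_collen lam j j.+1 (leqnSn j).
rewrite pi_after_colS //.
have [] := @foldl_step_col _ j.+1 (collen lam j.+1) ltac:(lia) (leqnn _) Hpi
  (fun k Hk => inv k ltac:(lia)).
rewrite take_oversize ?size_col_boxes // => Hpi' inv'.
by split=> // k Hk; rewrite inv' // ifT //; lia.
Qed.

Lemma foldl_step_increasing lo hi s pi : hi <= n ->
  (forall x, x \in s -> 1 <= x.2 <= collen lam x.1 /\ collen lam x.1 <= lo) ->
  perm_eq pi (iota 1 n) -> increasing_on lo hi pi ->
  perm_eq (foldl (step n lam T) pi s) (iota 1 n) /\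
  increasing_on lo hi (foldl (step n lam T) pi s).
Proof.
move=> Hhi; elim: s pi => [|[j i] s IH] pi //= Hs Hpi inc.
have /= [Hi Hlo] := Hs (j, i) (mem_head _ _); have Hc := collen_le_n j.
apply: IH; first by move=> x xs; apply: Hs; rewrite inE xs orbT.
  by apply: step_perm => //; lia.
by apply: step_increasing => //; lia.
Qed.

Lemma pi_at_col j i : 2 <= j <= lam1 lam -> 1 <= i <= collen lam j ->
  pi_at n lam T j i =
  foldl (step n lam T) (pi_after_col j.-1) (take (collen lam j - i).+1 (col_boxes j)).
Proof.
move=> Hj Hi; rewrite /pi_at /locs ifF; last by apply/eqP => -[]; lia.
have -> : iota 2 (lam1 lam).-1 = iota 2 j.-2 ++ iota j (lam1 lam - j).+1.
  by rewrite -[in iota j _](_ : 2 + j.-2 = j) -?iotaD; [congr iota | ]; lia.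
rewrite map_cat flatten_cat /= -/(col_boxes j); set A := flatten _.
have nA : (j, i) \notin A.
  apply/negP => /flattenP [s /mapP [j' Hj' ->] /mem_col_boxes [/= E _]].
  by move: Hj'; rewrite mem_iota E; lia.
have inC : (j, i) \in col_boxes j by apply: map_f; rewrite mem_rev mem_iota; lia.
rewrite index_cat (negbTE nA) index_cat inC index_col_boxes // -addnS take_cat ifF; last first.
  by rewrite ltnNge leq_addr.
rewrite addKn takel_cat ?size_col_boxes; last lia.
by rewrite foldl_cat /A foldl_flatten.
Qed.

Lemma pi_after_col_prefix_increasing j : 1 <= j <= lam1 lam ->
  increasing_on 0 (collen lam j) (pi_after_col j).
Proof.
move=> Hj k Hk1 Hk2; have [_ inv] := pi_after_col_spec Hj.
rewrite !inv; try lia; apply: tableau_col_lt; [exact: mem_diagram | lia].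
Qed.

Lemma zetas_sorted : sorted ltn (zetas lam).
Proof.
rewrite ltn_sorted_uniq_leq sort_uniq undup_uniq /=.
by apply: sort_sorted; exact: leq_total.
Qed.

Lemma mem_zetas j : 1 <= j <= lam1 lam -> collen lam j \in zetas lam.
Proof. by move=> Hj; rewrite mem_sort mem_undup; apply: map_f; rewrite mem_iota; lia. Qed.

Lemma zetasP x : x \in zetas lam -> exists2 j, 1 <= j <= lam1 lam & collen lam j = x.
Proof.
by rewrite mem_sort mem_undup => /mapP [j]; rewrite mem_iota => Hj ->; exists j => //; lia.
Qed.

Lemma dd_gt0 : 0 < dd lam.
Proof. by have := @mem_zetas 1 ltac:(have := lam1_gt0; lia); rewrite /dd; case: (zetas lam). Qed.

Lemma zeta_nth h : 1 <= h <= dd lam -> zeta n lam h = nth 0 (zetas lam) h.-1.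
Proof. by move=> Hh; rewrite /zeta !ifF //; apply/negbTE/eqP; lia. Qed.

Lemma zetas_le x y : x < dd lam -> y < dd lam -> x <= y ->
  nth 0 (zetas lam) x <= nth 0 (zetas lam) y.
Proof.
move=> Hx Hy Hxy; apply: (sorted_leq_nth leq_trans leqnn); rewrite ?inE //.
by apply: (sub_sorted _ zetas_sorted) => p q; apply: ltnW.
Qed.

Lemma zetas_le_dd x : x \in zetas lam -> x <= zeta n lam (dd lam).
Proof.
move=> xz; have Hx : index x (zetas lam) < dd lam by rewrite index_mem.
rewrite zeta_nth; last by have := dd_gt0; lia.
by rewrite -{1}(nth_index 0 xz); apply: zetas_le; lia.
Qed.

Lemma zeta_dd : zeta n lam (dd lam) = collen lam 1.
Proof.
have L1 := lam1_gt0; have D1 := dd_gt0.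
apply/eqP; rewrite eqn_leq (zetas_le_dd (mem_zetas _)) ?andbT; last lia.
have /zetasP [j Hj <-] : zeta n lam (dd lam) \in zetas lam.
  by rewrite zeta_nth ?D1 ?leqnn ?mem_nth ?ltn_predL.
by apply: leq_collen; lia.
Qed.

Lemma zeta_le_n h : h <= (dd lam).+1 -> zeta n lam h <= n.
Proof.
move=> Hh; have [-> | h_gt0] := posnP h; first by [].
have [-> | ne] := eqVneq h (dd lam).+1; first by rewrite /zeta eqxx.
have /zetasP [j _ <-] : zeta n lam h \in zetas lam by rewrite zeta_nth ?mem_nth -/(dd lam); lia.
exact: collen_le_n.
Qed.

Lemma zetas_lt_zeta h x : 1 <= h <= dd lam -> x \in zetas lam -> x < zeta n lam h ->
  x <= zeta n lam h.-1.
Proof.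
move=> Hh xz; have Hx : index x (zetas lam) < dd lam by rewrite index_mem.
rewrite zeta_nth // -{1}(nth_index 0 xz) => lt_x.
have Hh1 : h.-1 < dd lam by lia.
have lt_idx : index x (zetas lam) < h.-1.
  by rewrite ltnNge; apply/negP => /(zetas_le Hh1 Hx); rewrite leqNgt lt_x.
rewrite zeta_nth; last lia.
by rewrite -(nth_index 0 xz); apply: zetas_le; lia.
Qed.

Lemma beta_spec h : 1 <= h <= dd lam ->
  [/\ 1 <= beta n lam h <= lam1 lam, collen lam (beta n lam h) = zeta n lam h &
      forall j, beta n lam h < j <= lam1 lam -> collen lam j != zeta n lam h].
Proof.
move=> Hh; have /zetasP [j0 Hj0 Ej0] : zeta n lam h \in zetas lam.
  by rewrite zeta_nth ?mem_nth -/(dd lam); lia.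
rewrite /beta ifF; last by apply/eqP; lia.
have Hex : exists2 j, 1 <= j < (lam1 lam).+1 & collen lam j == zeta n lam h.
  by exists j0; [lia | apply/eqP].
have /= [Hb /eqP Eb Hmax] := bigmax_natP Hex.
by split=> [|//| j Hj]; [lia | apply: Hmax; lia].
Qed.

Lemma beta_range h : 1 <= h <= (dd lam).+1 -> 1 <= beta n lam h <= lam1 lam.
Proof.
move=> Hh; have [Ed | ne] := eqVneq h (dd lam).+1.
  by rewrite /beta Ed eqxx lam1_gt0.
by have [] := @beta_spec h ltac:(lia).
Qed.

Lemma collen_after_beta h j : 1 <= h <= (dd lam).+1 -> beta n lam h < j <= lam1 lam ->
  collen lam j <= zeta n lam h.-1.
Proof.
move=> Hh Hj; have [Ed | ne] := eqVneq h (dd lam).+1.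
  by rewrite Ed /= zeta_dd; apply: leq_collen; lia.
have [Hb Eb Hne] := @beta_spec h ltac:(lia).
apply: zetas_lt_zeta; [lia | apply: mem_zetas; lia |].
by rewrite ltn_neqAle Hne // -Eb leq_collen //; lia.
Qed.

Lemma pi_after_beta_increasing h : 1 <= h <= (dd lam).+1 ->
  increasing_on (zeta n lam h.-1) (zeta n lam h) (pi_after_col (beta n lam h)).
Proof.
move=> Hh; have [Ed | ne] := eqVneq h (dd lam).+1.
  have -> : beta n lam h = 1 by rewrite /beta Ed eqxx.
  have -> : zeta n lam h = n by rewrite /zeta Ed eqxx.
  by rewrite Ed /= zeta_dd; exact: pi11_increasing.
have [Hb Eb _] := @beta_spec h ltac:(lia).
by move=> k Hk1 Hk2; apply: pi_after_col_prefix_increasing; rewrite ?Eb //; lia.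
Qed.

Lemma pi_after_col_increasing h j : 1 <= h <= (dd lam).+1 -> beta n lam h <= j <= lam1 lam ->
  perm_eq (pi_after_col j) (iota 1 n) /\
  increasing_on (zeta n lam h.-1) (zeta n lam h) (pi_after_col j).
Proof.
move=> Hh; have Hb := beta_range Hh; elim: j => [|j IH] Hj; first lia.
have [Ej | lt_bj] := eqVneq (beta n lam h) j.+1.
  rewrite -Ej; split; last exact: pi_after_beta_increasing.
  by have [] := pi_after_col_spec Hb.
have [Hpi inc] := IH ltac:(lia); rewrite pi_after_colS; last lia.
apply: foldl_step_increasing => //; first by apply: zeta_le_n; lia.
by move=> x /mem_col_boxes [-> Hx]; split=> //; apply: collen_after_beta; lia.
Qed.

Lemma pi_at_row1 j : 1 <= j <= lam1 lam -> pi_at n lam T j 1 = pi_after_col j.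
Proof.
move=> Hj; have [-> | ne] := eqVneq j 1; first by rewrite /pi_at eqxx.
rewrite pi_at_col; [|lia|]; last by case/andP: Hj => _ /collen_pos; lia.
rewrite take_oversize ?size_col_boxes; last lia.
have j_gt0 : 0 < j by lia.
by rewrite -[in RHS](prednK j_gt0) pi_after_colS ?prednK //; lia.
Qed.

End Tableau.

Theorem lemma4p1 (n : nat) (lam : seq nat) (T : nat -> nat -> nat) (h : nat) :
  0 < n -> is_npartition n lam -> semistandard n lam T ->
  1 <= h <= (dd lam).+1 ->
  forall j i, pi_defined lam j i -> read_le (beta n lam h, 1) (j, i) ->
  forall k, zeta n lam h.-1 + 1 <= k -> k < zeta n lam h ->
    pent (pi_at n lam T j i) k < pent (pi_at n lam T j i) k.+1.
Proof.
move=> _ Hlam HT Hh j i Hdef Hle k Hk1 Hk2.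
suff : increasing_on (zeta n lam h.-1) (zeta n lam h) (pi_at n lam T j i) by apply.
have /andP [Hb1 Hbl] := beta_range Hlam Hh.
move: Hle; rewrite /read_le /= => /orP [lt_bj | /andP [/eqP <- le_i1]].
- have /andP [_ /and4P [_ Hjl Hi1 Hic]] : (2 <= j) && in_diagram lam j i.
    by case/orP: Hdef => [/eqP [Ej _] | //]; lia.
  have [Hpi inc] := pi_after_col_increasing Hlam HT Hh
    (ltac:(lia) : beta n lam h <= j.-1 <= lam1 lam).
  have Hhi : zeta n lam h <= n by apply: (zeta_le_n Hlam); lia.
  rewrite pi_at_col; [|lia|lia]; apply: (foldl_step_increasing T Hlam Hhi _ Hpi inc).2.
  by move=> x /mem_take /mem_col_boxes [-> Hx]; split=> //; apply: (collen_after_beta Hlam); lia.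
- have -> : i = 1 by case/orP: Hdef => [/eqP [_ ->] | /andP [_ /and4P [_ _ i_pos _]]]; lia.
  have Hb : beta n lam h <= beta n lam h <= lam1 lam by rewrite leqnn.
  by rewrite pi_at_row1 ?Hb1 //; have [] := pi_after_col_increasing Hlam HT Hh Hb.
Qed.
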